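(* In Ruleset A, for any superposition of single Nim heaps whose largest heap has size $k\ge1$, $\langle \mathrm{Nim}(i_1),\ldots,\mathrm{Nim}(i_\ell)\rangle_A\equiv *(k-1)$, where $k=\max_{1\le j\le \ell} i_j$.
   Context: Single-heap Nim: $\mathrm{Nim}(x)$ is a heap of $x$ tokens; classical move $(1,-j)$, $j\ge1$, removes $j$ tokens and is illegal if fewer than $j$ tokens remain. Quantum variation: a position is a nonempty finite set $\langle G_1,\ldots,G_n\rangle$ of classical positions; a classical move is legal if legal in some $G_i$; a Q-move is a nonempty set of legal classical moves $\{m_1,\ldots,m_k\}$, leading to the superposition of all legal results of applying some $m_j$ to some $G_i$. Ruleset A (subscript $A$): only Q-moves consisting of at least two distinct classical moves are allowed. The player with no allowed Q-move loses. $\equiv$ is game equivalence (same outcome in every disjunctive sum), and $*k$ is the value of a classical Nim heap of $k$ tokens ($*0=0$). *)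

From mathcomp Require Import all_boot.
Set Implicit Arguments. Unset Strict Implicit. Unset Printing Implicit Defensive.

Inductive igame : Type := IG : seq igame -> igame.

(* Disjunctive sum: a move is a move in exactly one component. *)
Fixpoint gadd (G H : igame) {struct G} : igame :=
  match G with IG gs =>
    let fix addr (H : igame) : igame :=
      match H with IG hs => IG (map (fun g => gadd g H) gs ++ map addr hs) end
    in addr H
  end.

Fixpoint gwin (G : igame) : bool :=
  match G with IG gs => has (fun g => ~~ gwin g) gs end.

Definition gequiv (G H : igame) : Prop := forall X, gwin (gadd G X) = gwin (gadd H X).

Fixpoint nimopts (k : nat) : seq igame :=
  match k with 0 => [::] | k'.+1 => IG (nimopts k') :: nimopts k' end.
Definition nim (k : nat) : igame := IG (nimopts k).

Fixpoint subseqs (s : seq nat) : seq (seq nat) :=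
  match s with
  | [::] => [:: [::]]
  | x :: s' => let r := subseqs s' in r ++ map (cons x) r
  end.

(* A quantum position of single-heap Nim: a nonempty finite set of heap sizes,
   represented by a list S (only membership matters). *)
Definition qmax (S : seq nat) : nat := \max_(i <- S) i.

(* Ruleset A Q-moves: sets M of at least two distinct classical moves (1,-j),
   each legal in some heap, i.e. 1 <= j <= max S. *)
Definition qmovesA (S : seq nat) : seq (seq nat) :=
  [seq M <- subseqs (iota 1 (qmax S)) | 2 <= size M].

Definition qresult (S M : seq nat) : seq nat :=
  undup (flatten [seq [seq i - j | j <- M & j <= i] | i <- S]).

Fixpoint qtreeA (fuel : nat) (S : seq nat) : igame :=
  match fuel with
  | 0 => IG [::]
  | n.+1 => IG [seq qtreeA n (qresult S M) | M <- qmovesA S]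
  end.

(* The game tree of the superposition <Nim(i) | i in S>_A (max strictly decreases
   along every move, so fuel qmax S + 1 suffices). *)
Definition qnimA (S : seq nat) : igame := qtreeA (qmax S).+1 S.

(* The game <Nim(i) | i in S>_A only depends on k = max S.  A Q-move M has two
   distinct moves j <= k, so min M < k and the maximal heap of the result is
   k - min M, which lies in [1, k-1]; conversely M = {k - b, k} reaches
   maximum exactly b for every 1 <= b <= k-1.  By induction on k the options
   are therefore exactly the values *0, ..., *(k-2), whose mex is *(k-1). *)
From mathcomp Require Import all_boot.
From mathcomp Require Import zify.

Set Implicit Arguments.
Unset Strict Implicit.

Definition igame_ind_In (P : igame -> Prop)
    (IH : forall gs, (forall g, List.In g gs -> P g) -> P (IG gs)) :
  forall G, P G :=
  fix F G := match G with IG gs => IH gs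
    ((fix F_in l : forall g, List.In g l -> P g :=
       match l with
       | nil => fun g (hg : List.In g nil) => False_ind _ hg
       | cons x l' => fun g hg => match hg with
                      | or_introl e => eq_ind x P (F x) g e
                      | or_intror h => F_in l' g h end
       end) gs) end.

Lemma eq_has_In (T : Type) (p q : pred T) s :
  (forall x, List.In x s -> p x = q x) -> has p s = has q s.
Proof.
elim: s => //= y s IHs pq; rewrite pq /=; last by left.
by rewrite IHs // => x hx; apply: pq; right.
Qed.

Lemma gwin_gadd gs hs :
  gwin (gadd (IG gs) (IG hs)) =
  has (fun g => ~~ gwin (gadd g (IG hs))) gs
  || has (fun h => ~~ gwin (gadd (IG gs) h)) hs.
Proof. by rewrite /= has_cat !has_map. Qed.

Lemma nimoptsE n : nimopts n = [seq nim a | a <- rev (iota 0 n)].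
Proof.
by elim: n => // n IHn; rewrite -[in RHS]addn1 iotaD cats1 rev_rcons /= -IHn.
Qed.

Lemma has_nimopts (p : pred igame) n :
  has p (nimopts n) = [exists a : 'I_n, p (nim a)].
Proof.
rewrite nimoptsE has_map has_rev; apply/hasP/existsP => [[a] | [a pa]].
  by rewrite mem_iota => /= lt_an pa; exists (Ordinal lt_an).
by exists (nat_of_ord a); rewrite // mem_iota /=.
Qed.

Lemma mex_gequiv_nim (T : eqType) (f : T -> igame) (s : seq T) n :
  (forall x, x \in s -> exists2 a, a < n & gequiv (f x) (nim a)) ->
  (forall a, a < n -> exists2 x, x \in s & gequiv (f x) (nim a)) ->
  gequiv (IG (map f s)) (nim n).
Proof.
move=> opt_lt opt_all X; elim/igame_ind_In: X => xs IHX.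
rewrite !gwin_gadd; congr orb; last by apply: eq_has_In => x /IHX ->.
rewrite has_map has_nimopts; apply/hasP/existsP => [[x xs_x] | [a]].
  have [a lt_an eq_xa] := opt_lt x xs_x.
  by exists (Ordinal lt_an); rewrite -[nim _]/(nim a) -eq_xa.
have [x xs_x eq_xa] := opt_all a (ltn_ord a).
by exists x; rewrite //= eq_xa.
Qed.

Lemma leq_qmax S i : i \in S -> i <= qmax S.
Proof. by move=> Si; apply: (@leq_bigmax_seq _ S xpredT id). Qed.

Lemma qmax_leq S m : {in S, forall i, i <= m} -> qmax S <= m.
Proof. by move=> leSm; apply/bigmax_leqP_seq => i Si _; apply: leSm. Qed.

Lemma qmax_mem S : 0 < qmax S -> qmax S \in S.
Proof.
elim: S => [|x S IHS]; first by rewrite /qmax big_nil.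
rewrite /qmax big_cons -/(qmax S) inE /maxn.
case: (ltnP x (qmax S)) => [lt_xk _ | _ _]; last by rewrite eqxx.
by rewrite IHS ?orbT // (leq_ltn_trans (leq0n x) lt_xk).
Qed.

Lemma mem_subseqs (s M : seq nat) : (M \in subseqs s) = subseq M s.
Proof.
elim: s M => [|x s IHs] [|y M] //=; rewrite mem_cat IHs ?sub0seq //.
have -> : (y :: M \in map (cons x) (subseqs s)) = (y == x) && subseq M s.
  apply/mapP/andP => [[M' + [-> ->]] | [/eqP -> subMs]]; first by rewrite IHs.
  by exists M; rewrite ?IHs.
by case: eqP => [-> | _]; rewrite ?orbF // orb_idl // => /cons_subseq.
Qed.

Lemma qresultP S M x :
  reflect (exists i j, [/\ i \in S, j \in M, j <= i & x = i - j])
          (x \in qresult S M).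
Proof.
rewrite mem_undup; apply: (iffP flattenP).
  move=> [_ /mapP [i Si ->]].
  by case/mapP => j; rewrite mem_filter => /andP [le_ji Mj] ->; exists i, j.
move=> [i [j [Si Mj le_ji ->]]].
exists [seq i - j0 | j0 <- M & j0 <= i]; first by apply/mapP; exists i.
by apply/mapP; exists j; rewrite ?mem_filter ?le_ji.
Qed.

Lemma qmax_qresult_leq S M d :
  {in M, forall j, d <= j} -> qmax (qresult S M) <= qmax S - d.
Proof.
move=> geMd; apply: qmax_leq => _ /qresultP [i [j [Si Mj le_ji ->]]].
by have := leq_qmax Si; have := geMd j Mj; lia.
Qed.

Lemma qmax_qresult_geq S M j :
  0 < qmax S -> j \in M -> j <= qmax S -> qmax S - j <= qmax (qresult S M).
Proof.
move=> k_gt0 Mj le_jk; apply: leq_qmax; apply/qresultP.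
by exists (qmax S), j; split; rewrite ?qmax_mem.
Qed.

Lemma uniq_exists_lt (M : seq nat) k :
  uniq M -> 1 < size M -> {in M, forall j, j <= k} ->
  exists2 j, j \in M & j < k.
Proof.
move=> uM sizeM leMk; apply/hasP; apply: contraLR sizeM => /hasPn geMk.
rewrite -leqNgt -[1]/(size [:: k]); apply: uniq_leq_size uM _ => j Mj.
by rewrite inE eqn_leq leMk //= leqNgt geMk.
Qed.

Lemma qmovesAP S M : M \in qmovesA S ->
  [/\ uniq M, 1 < size M & {in M, forall j, 0 < j <= qmax S}].
Proof.
rewrite mem_filter mem_subseqs => /andP [sizeM subM]; split => //.
  exact: subseq_uniq subM (iota_uniq _ _).
by move=> j /(mem_subseq subM); rewrite mem_iota; lia.
Qed.

Lemma pair_mem_qmovesA S j : 0 < j < qmax S -> [:: j; qmax S] \in qmovesA S.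
Proof.
move=> /andP [j_gt0 lt_jk]; rewrite mem_filter mem_subseqs /=.
have -> : qmax S = (qmax S).-1 + 1 by lia.
rewrite iotaD -cat1s; apply: cat_subseq; rewrite sub1seq mem_iota; lia.
Qed.

Lemma qmax_qresult_bounds S M : 0 < qmax S -> M \in qmovesA S ->
  0 < qmax (qresult S M) < qmax S.
Proof.
move=> k_gt0 /qmovesAP [uM sizeM boundM].
have geM1 : {in M, forall j, 1 <= j} by move=> j /boundM /andP [].
have [j Mj lt_jk] : exists2 j, j \in M & j < qmax S.
  by apply: uniq_exists_lt => // j /boundM /andP [].
have := qmax_qresult_geq k_gt0 Mj (ltnW lt_jk).
have := @qmax_qresult_leq S M _ geM1.
lia.
Qed.

Lemma qmax_qresult_pair S b : 0 < b < qmax S ->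
  qmax (qresult S [:: qmax S - b; qmax S]) = b.
Proof.
move=> b_bounds; set M := [:: qmax S - b; qmax S].
have Mj : qmax S - b \in M by rewrite inE eqxx.
have geM : {in M, forall j, qmax S - b <= j}.
  by move=> j; rewrite !inE => /orP [] /eqP ->; rewrite ?leq_subr.
have k_gt0 : 0 < qmax S by lia.
have := qmax_qresult_geq k_gt0 Mj (leq_subr _ _).
have := @qmax_qresult_leq S M _ geM.
lia.
Qed.

Lemma qtreeA_gequiv_nim n S : qmax S < n -> 0 < qmax S ->
  gequiv (qtreeA n S) (nim (qmax S).-1).
Proof.
elim: n S => [|n IHn] S // lt_kn k_gt0 /=.
apply: mex_gequiv_nim => [M MS | a lt_a].
  have /andP [r_gt0 lt_rk] := qmax_qresult_bounds k_gt0 MS.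
  by exists (qmax (qresult S M)).-1; [lia | apply: IHn; lia].
have b_bounds : 0 < a.+1 < qmax S by lia.
exists [:: qmax S - a.+1; qmax S]; first by apply: pair_mem_qmovesA; lia.
have := IHn (qresult S [:: qmax S - a.+1; qmax S]).
by rewrite qmax_qresult_pair //; apply; lia.
Qed.

Theorem lemma1 (s : seq nat) :
  s != [::] -> 1 <= \max_(i <- s) i ->
  gequiv (qnimA s) (nim (\max_(i <- s) i).-1).
Proof. by move=> _; apply: qtreeA_gequiv_nim. Qed.
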